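(* Let $R\ge1$, $\Gamma\ge1$, $1\le s\le n_2$, $\gamma>0$, $c\ge1$. Let $\hat X=\sum_{r=1}^R\hat u^r(\hat v^r)^T$ have rank $R$, with $\|\hat v^r\|_1\le\sqrt s\|\hat v^r\|_2$ for all $r$ and $\sum_r\|\hat u^r\|_2^2\|\hat v^r\|_2^2\le\Gamma^2$, and let $c_{\hat U}>0$ satisfy $\sum_{r=1}^R(\|\hat u^r\|_2\|\hat v^r\|_2)^{2/3}\le c_{\hat U}R^{2/3}\|\hat X\|_{2/3}^{2/3}$. Let $\eta\in\mathbb{R}^m\setminus\{0\}$, $y=\mathcal{A}(\hat X)+\eta$, and set $\alpha=\beta=\|\eta\|_2^2/\|\hat X\|_{2/3}^{2/3}$, assumed $<1$. Assume $\mathcal{A}$ has the additive rank-$2R$ effectively $\big(n_1,\max\{s,\gamma^2(\|\hat X\|_{2/3}^{2/3}/\|\eta\|_2^2)^2\}\big)$-sparse RIP$_{(c+1)\Gamma}$ with constant $0<\delta<1$. Then for any global minimizer $(u^1_{\alpha,\beta},\dots,v^R_{\alpha,\beta})$ of $J^R_{\alpha,\beta}$ with $\|\sigma_{\alpha,\beta}\|_2\le c\Gamma$ (where $(\sigma_{\alpha,\beta})_r=\|u^r_{\alpha,\beta}\|_2\|v^r_{\alpha,\beta}\|_2$) and $\|v^r_{\alpha,\beta}\|_2\ge(\|\hat X\|_F+\|\eta\|_2+\sqrt\delta)^2/\gamma$ for all $r\in[R]$, $$\|\hat X-X_{\alpha,\beta}\|_F\le\left(2\sqrt{c_{\hat U}R^{2/3}s^{1/3}}+2\right)\|\eta\|_2+\sqrt\delta,$$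 where $X_{\alpha,\beta}=\sum_{r=1}^Ru^r_{\alpha,\beta}(v^r_{\alpha,\beta})^T$.
   Context: $J^R_{\alpha,\beta}(u^1,\dots,u^R,v^1,\dots,v^R)=\|y-\mathcal{A}(\sum_{r=1}^Ru^r(v^r)^T)\|_2^2+\alpha\sum_r\|u^r\|_2^2+\beta\sum_r\|v^r\|_1$, with $\mathcal{A}:\mathbb{R}^{n_1\times n_2}\to\mathbb{R}^m$ linear. $\|Z\|_p$ is the Schatten-$p$ (quasi-)norm (the $\ell_p$ quasi-norm of the singular values). For $n\ge1,s>0$: $K_{n,s}=\{z\in\mathbb{R}^n:\|z\|_2\le1,\|z\|_1\le\sqrt s\}$. $K^{R,\Gamma}_{s_1,s_2}$ is the set of $Z=\sum_{r=1}^R\sigma_ru^r(v^r)^T$ with $u^r\in K_{n_1,s_1}$, $v^r\in K_{n_2,s_2}$, $\|u^r\|_2=\|v^r\|_2=1$, $\|\sigma\|_2\le\Gamma$. $\mathcal{A}$ has the additive rank-$R$ effectively $(s_1,s_2)$-sparse RIP$_\Gamma$ with constant $\delta$ if $|\|\mathcal{A}(Z)\|_2^2-\|Z\|_F^2|\le\delta$ for all $Z\in K^{R,\Gamma}_{s_1,s_2}$. *)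

(* Vectors in R^n are functions nat -> R
   (only indices < n matter); n1 x n2 matrices are nat -> nat -> R
   (only indices i < n1, j < n2 matter).  Families (u^1..u^R) are
   nat -> (nat -> R), indexed by r < R (0-based). *)
From Stdlib Require Import Reals ClassicalEpsilon.
Open Scope R_scope.

Fixpoint rsum (n : nat) (f : nat -> R) : R :=
  match n with O => 0 | S k => rsum k f + f k end.

(* nonnegative real power x^p, with the convention 0^p = 0 (p > 0) *)
Definition rpow (x p : R) : R :=
  if Rle_dec x 0 then 0 else Rpower x p.

Definition norm2 (n : nat) (v : nat -> R) : R := sqrt (rsum n (fun i => v i ^ 2)).
Definition norm1 (n : nat) (v : nat -> R) : R := rsum n (fun i => Rabs (v i)).

Definition frob (n1 n2 : nat) (Z : nat -> nat -> R) : R :=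
  sqrt (rsum n1 (fun i => rsum n2 (fun j => Z i j ^ 2))).

Definition mat_eq (n1 n2 : nat) (Z W : nat -> nat -> R) : Prop :=
  forall i j, (i < n1)%nat -> (j < n2)%nat -> Z i j = W i j.

Definition wsum_outer (K : nat) (sig : nat -> R) (U V : nat -> nat -> R)
  : nat -> nat -> R :=
  fun i j => rsum K (fun r => sig r * U r i * V r j).

Definition sum_outer (K : nat) (U V : nat -> nat -> R) : nat -> nat -> R :=
  fun i j => rsum K (fun r => U r i * V r j).

Definition has_rank (n1 n2 : nat) (Z : nat -> nat -> R) (k : nat) : Prop :=
  (exists U V, mat_eq n1 n2 Z (sum_outer k U V)) /\
  (forall j U V, mat_eq n1 n2 Z (sum_outer j U V) -> (k <= j)%nat).

Definition orthonormal (n k : nat) (P : nat -> nat -> R) : Prop :=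
  forall a b, (a < k)%nat -> (b < k)%nat ->
    rsum n (fun i => P a i * P b i) = if Nat.eqb a b then 1 else 0.

Definition is_svd (n1 n2 : nat) (Z : nat -> nat -> R)
  (k : nat) (sig : nat -> R) (P Q : nat -> nat -> R) : Prop :=
  (forall i, (i < k)%nat -> 0 < sig i) /\
  orthonormal n1 k P /\ orthonormal n2 k Q /\
  mat_eq n1 n2 Z (wsum_outer k sig P Q).

(* ||Z||_p^p = sum of p-th powers of the singular values of Z
   (Schatten-p quasi-norm to the power p).  Well defined since an SVD
   exists and singular values are unique. *)
Definition schatten_pow (p : R) (n1 n2 : nat) (Z : nat -> nat -> R) : R :=
  epsilon (inhabits 0) (fun s => exists k sig P Q,
    is_svd n1 n2 Z k sig P Q /\ s = rsum k (fun i => rpow (sig i) p)).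

(* linear map A : R^{n1 x n2} -> R^m given by its coefficients:
   A(Z)_k = sum_{i<n1, j<n2} a k i j * Z i j  (every linear map has this form) *)
Definition applyA (n1 n2 : nat) (a : nat -> nat -> nat -> R)
  (Z : nat -> nat -> R) : nat -> R :=
  fun k => rsum n1 (fun i => rsum n2 (fun j => a k i j * Z i j)).

Definition inK (n : nat) (s : R) (z : nat -> R) : Prop :=
  norm2 n z <= 1 /\ norm1 n z <= sqrt s.

Definition inKR (n1 n2 Rk : nat) (Gam s1 s2 : R) (Z : nat -> nat -> R) : Prop :=
  exists (sig : nat -> R) (U V : nat -> nat -> R),
    (forall r, (r < Rk)%nat ->
       inK n1 s1 (U r) /\ inK n2 s2 (V r) /\
       norm2 n1 (U r) = 1 /\ norm2 n2 (V r) = 1) /\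
    norm2 Rk sig <= Gam /\
    mat_eq n1 n2 Z (wsum_outer Rk sig U V).

Definition sparse_RIP (m n1 n2 : nat) (a : nat -> nat -> nat -> R)
  (Rk : nat) (s1 s2 Gam delta : R) : Prop :=
  forall Z, inKR n1 n2 Rk Gam s1 s2 Z ->
    Rabs (norm2 m (applyA n1 n2 a Z) ^ 2 - frob n1 n2 Z ^ 2) <= delta.

Definition mat_sub (Z W : nat -> nat -> R) : nat -> nat -> R :=
  fun i j => Z i j - W i j.

Definition Jfun (m n1 n2 : nat) (a : nat -> nat -> nat -> R) (y : nat -> R)
  (alpha beta : R) (Rk : nat) (U V : nat -> nat -> R) : R :=
  norm2 m (fun k => y k - applyA n1 n2 a (sum_outer Rk U V) k) ^ 2
  + alpha * rsum Rk (fun r => norm2 n1 (U r) ^ 2)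
  + beta * rsum Rk (fun r => norm1 n2 (V r)).

From Stdlib Require Import Reals Lra Lia ClassicalEpsilon Classical.
Open Scope R_scope.

(* Compare the minimiser (U, V) with two competitors.  Against (0, 0): J(U, V) <= |y|^2
   <= (|Xh|_F + |eta| + sqrt delta)^2, the last step by the RIP applied to Xh; so the l1
   penalty of each v^r is at most gamma |v^r|_2 / alpha, i.e. v^r is effectively
   (gamma/alpha)^2-sparse.  Hence Xh - X lies in the RIP set and
   |Xh - X|_F <= |A(Xh - X)| + sqrt delta <= |y - A X| + |eta| + sqrt delta.
   Against the factorisation of Xh rescaled, pair by pair, to equality in AM-GM:
   |y - A X|^2 <= |eta|^2 + 2 alpha s^(1/3) sum_r sigma_r^(2/3) <= |eta|^2 (1 + 2 Q)
   with Q = cU R^(2/3) s^(1/3), by the choice alpha = |eta|^2 / |Xh|_(2/3)^(2/3). *)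

Lemma rsum_ext n f g :
  (forall i, (i < n)%nat -> f i = g i) -> rsum n f = rsum n g.
Proof.
  induction n as [|n IH]; intros H; simpl; [reflexivity|].
  rewrite IH, H; [reflexivity | lia | intros; apply H; lia].
Qed.

Lemma rsum_zero n : rsum n (fun _ => 0) = 0.
Proof. induction n as [|n IH]; simpl; lra. Qed.

Lemma rsum_plus n f g : rsum n (fun i => f i + g i) = rsum n f + rsum n g.
Proof. induction n as [|n IH]; simpl; [lra|]. rewrite IH; ring. Qed.

Lemma rsum_minus n f g : rsum n (fun i => f i - g i) = rsum n f - rsum n g.
Proof. induction n as [|n IH]; simpl; [lra|]. rewrite IH; ring. Qed.

Lemma rsum_scal n c f : rsum n (fun i => c * f i) = c * rsum n f.
Proof. induction n as [|n IH]; simpl; [lra|]. rewrite IH; ring. Qed.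

Lemma rsum_const1 n : rsum n (fun _ => 1) = INR n.
Proof. induction n as [|n IH]; cbn [rsum]; [reflexivity|]. rewrite IH, S_INR; reflexivity. Qed.

Lemma rsum_app n k f :
  rsum (n + k) f = rsum n f + rsum k (fun i => f (n + i)%nat).
Proof.
  induction k as [|k IH]; simpl; [rewrite Nat.add_0_r; ring|].
  rewrite Nat.add_succ_r; simpl; rewrite IH; ring.
Qed.

Lemma rsum_le n f g :
  (forall i, (i < n)%nat -> f i <= g i) -> rsum n f <= rsum n g.
Proof.
  induction n as [|n IH]; intros H; simpl; [lra|].
  pose proof (H n (Nat.lt_succ_diag_r n)).
  enough (rsum n f <= rsum n g) by lra.
  apply IH; intros; apply H; lia.
Qed.

Lemma rsum_nonneg n f : (forall i, (i < n)%nat -> 0 <= f i) -> 0 <= rsum n f.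
Proof. intros H; rewrite <- (rsum_zero n); apply rsum_le, H. Qed.

Lemma rsum_term_le n f k :
  (forall i, (i < n)%nat -> 0 <= f i) -> (k < n)%nat -> f k <= rsum n f.
Proof.
  induction n as [|n IH]; intros H Hk; simpl; [lia|].
  assert (0 <= f n) by (apply H; lia).
  destruct (Nat.eq_dec k n) as [->|Hkn].
  - enough (0 <= rsum n f) by lra. apply rsum_nonneg; intros; apply H; lia.
  - enough (f k <= rsum n f) by lra. apply IH; [intros; apply H|]; lia.
Qed.

Lemma rsum_supp0 n f :
  (1 <= n)%nat -> (forall i, (0 < i)%nat -> f i = 0) -> rsum n f = f O.
Proof.
  intros Hn Hf. induction n as [|n IH]; [lia|]. cbn [rsum].
  destruct n as [|n]; [simpl; ring|].
  rewrite IH, (Hf (S n)) by lia; ring.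
Qed.

Lemma le_of_sqr_le x y : 0 <= y -> x ^ 2 <= y ^ 2 -> x <= y.
Proof. intros; nra. Qed.

Lemma le_add_sqrt_of_sqr x y d :
  0 <= x -> 0 <= y -> 0 <= d -> x ^ 2 - y ^ 2 <= d -> x <= y + sqrt d.
Proof.
  intros Hx Hy Hd H. pose proof (sqrt_pos d). pose proof (pow2_sqrt d Hd).
  apply le_of_sqr_le; nra.
Qed.

Lemma sqrt_sum_sqr_le x y : 0 <= x -> 0 <= y -> sqrt (x ^ 2 + y ^ 2) <= x + y.
Proof.
  intros Hx Hy. rewrite <- (sqrt_pow2 (x + y)) by lra.
  apply sqrt_le_1_alt; nra.
Qed.

Lemma le_mul_one_plus_sqrt x e q :
  0 <= x -> 0 <= e -> 0 <= q -> x ^ 2 <= e ^ 2 * (1 + 2 * q) -> x <= e * (1 + 2 * sqrt q).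
Proof.
  intros Hx He Hq H. pose proof (sqrt_pos q). pose proof (pow2_sqrt q Hq).
  apply le_of_sqr_le; nra.
Qed.

Lemma le_sqrt_Rmax_sqr s x : 0 <= x -> x <= sqrt (Rmax s (x ^ 2)).
Proof.
  intros Hx; rewrite <- (sqrt_pow2 x Hx) at 1; apply sqrt_le_1_alt, Rmax_r.
Qed.

Lemma norm2_nonneg n u : 0 <= norm2 n u.
Proof. apply sqrt_pos. Qed.

Lemma norm1_nonneg n u : 0 <= norm1 n u.
Proof. apply rsum_nonneg; intros; apply Rabs_pos. Qed.

Lemma norm2_sq n u : norm2 n u ^ 2 = rsum n (fun i => u i ^ 2).
Proof. apply pow2_sqrt, rsum_nonneg; intros; apply pow2_ge_0. Qed.

Lemma norm2_ext n u v : (forall i, (i < n)%nat -> u i = v i) -> norm2 n u = norm2 n v.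
Proof. intros H; unfold norm2; f_equal; apply rsum_ext; intros; rewrite H; auto. Qed.

Lemma norm2_const0 n : norm2 n (fun _ => 0) = 0.
Proof.
  unfold norm2; rewrite (rsum_ext n _ (fun _ => 0)) by (intros; simpl; ring).
  rewrite rsum_zero; apply sqrt_0.
Qed.

Lemma norm1_const0 n : norm1 n (fun _ => 0) = 0.
Proof.
  unfold norm1; rewrite (rsum_ext n _ (fun _ => 0)) by (intros; apply Rabs_R0).
  apply rsum_zero.
Qed.

Lemma norm2_opp n u : norm2 n (fun i => - u i) = norm2 n u.
Proof. unfold norm2; f_equal; apply rsum_ext; intros; ring. Qed.

Lemma norm2_scale_sq n t u : norm2 n (fun i => t * u i) ^ 2 = t ^ 2 * norm2 n u ^ 2.
Proof. rewrite !norm2_sq, <- rsum_scal; apply rsum_ext; intros; ring. Qed.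

Lemma norm1_div n t v : 0 < t -> norm1 n (fun j => v j / t) = norm1 n v / t.
Proof.
  intros Ht; unfold norm1, Rdiv; rewrite Rmult_comm, <- rsum_scal.
  apply rsum_ext; intros.
  rewrite Rabs_mult, Rabs_inv, (Rabs_pos_eq t) by lra; ring.
Qed.

Lemma norm2_eq0 n u : norm2 n u = 0 -> forall i, (i < n)%nat -> u i = 0.
Proof.
  intros H i Hi.
  assert (Hsum : rsum n (fun k => u k ^ 2) = 0) by (rewrite <- norm2_sq, H; ring).
  pose proof (rsum_term_le n (fun k => u k ^ 2) i (fun k _ => pow2_ge_0 (u k)) Hi).
  pose proof (pow2_ge_0 (u i)). nra.
Qed.

Lemma norm1_eq0 n u : norm1 n u = 0 -> forall i, (i < n)%nat -> u i = 0.
Proof.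
  intros H i Hi.
  pose proof (rsum_term_le n (fun k => Rabs (u k)) i (fun k _ => Rabs_pos (u k)) Hi).
  unfold norm1 in H. pose proof (Rabs_pos (u i)).
  destruct (Req_dec (u i) 0) as [|Hne]; [assumption|].
  pose proof (Rabs_no_R0 _ Hne). lra.
Qed.

Lemma Cauchy_Schwarz n u v :
  rsum n (fun i => u i * v i) ^ 2
  <= rsum n (fun i => u i ^ 2) * rsum n (fun i => v i ^ 2).
Proof.
  induction n as [|n IH]; cbn [rsum]; [lra|].
  set (A := rsum n (fun i => u i * v i)) in *.
  set (B := rsum n (fun i => u i ^ 2)) in *.
  set (C := rsum n (fun i => v i ^ 2)) in *.
  assert (HB : 0 <= B) by (apply rsum_nonneg; intros; apply pow2_ge_0).
  assert (HC : 0 <= C) by (apply rsum_nonneg; intros; apply pow2_ge_0).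
  assert (Hcross : 2 * A * (u n * v n) <= B * v n ^ 2 + C * u n ^ 2).
  { assert (Hsq : (2 * A * (u n * v n)) ^ 2 <= (B * v n ^ 2 + C * u n ^ 2) ^ 2).
    { pose proof (pow2_ge_0 (B * v n ^ 2 - C * u n ^ 2)).
      pose proof (pow2_ge_0 (u n * v n)). nra. }
    apply le_of_sqr_le; [nra|exact Hsq]. }
  nra.
Qed.

Lemma rsum_mul_le_norm2 n u v : rsum n (fun i => u i * v i) <= norm2 n u * norm2 n v.
Proof.
  apply le_of_sqr_le; [apply Rmult_le_pos; apply norm2_nonneg|].
  rewrite Rpow_mult_distr, !norm2_sq; apply Cauchy_Schwarz.
Qed.

Lemma norm2_add_le n u v : norm2 n (fun i => u i + v i) <= norm2 n u + norm2 n v.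
Proof.
  pose proof (norm2_nonneg n u); pose proof (norm2_nonneg n v).
  apply le_of_sqr_le; [lra|].
  assert (Hexp : norm2 n (fun i => u i + v i) ^ 2
                 = norm2 n u ^ 2 + 2 * rsum n (fun i => u i * v i) + norm2 n v ^ 2).
  { rewrite !norm2_sq, <- rsum_scal, <- !rsum_plus; apply rsum_ext; intros; ring. }
  rewrite Hexp; pose proof (rsum_mul_le_norm2 n u v); nra.
Qed.

Lemma norm2_sub_le n u v : norm2 n (fun i => u i - v i) <= norm2 n u + norm2 n v.
Proof. rewrite <- (norm2_opp n v); apply (norm2_add_le n u (fun i => - v i)). Qed.

Lemma norm1_le_sqrt_dim n u : norm1 n u <= sqrt (INR n) * norm2 n u.
Proof.
  assert (H1 : norm2 n (fun _ => 1) = sqrt (INR n)).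
  { unfold norm2; f_equal; rewrite <- rsum_const1; apply rsum_ext; intros; ring. }
  assert (Habs : norm2 n (fun i => Rabs (u i)) = norm2 n u).
  { unfold norm2; f_equal; apply rsum_ext; intros; apply pow2_abs. }
  rewrite <- H1, <- Habs, Rmult_comm; unfold norm1.
  rewrite (rsum_ext n _ (fun i => Rabs (u i) * 1)) by (intros; ring).
  apply rsum_mul_le_norm2.
Qed.

Lemma norm2_pos_dim n u : 0 < norm2 n u -> (1 <= n)%nat.
Proof. destruct n; [unfold norm2; simpl; rewrite sqrt_0; lra | lia]. Qed.

Lemma norm2_pos_of_nonzero n u : (exists k, (k < n)%nat /\ u k <> 0) -> 0 < norm2 n u.
Proof.
  intros [k [Hk Hu]]. destruct (norm2_nonneg n u) as [|H0]; [assumption|].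
  exfalso; exact (Hu (norm2_eq0 n u (eq_sym H0) k Hk)).
Qed.

Lemma rpow_nonneg x p : 0 <= rpow x p.
Proof. unfold rpow; destruct (Rle_dec x 0); [lra|left; apply exp_pos]. Qed.

Lemma rpow_pos x p : 0 < x -> 0 < rpow x p.
Proof. intros; unfold rpow; destruct (Rle_dec x 0); [lra|apply exp_pos]. Qed.

Lemma rpow_le_compat x y p : 0 <= p -> 0 <= x <= y -> rpow x p <= rpow y p.
Proof.
  intros Hp Hxy; unfold rpow.
  destruct (Rle_dec x 0); [apply rpow_nonneg|].
  destruct (Rle_dec y 0); [lra|]. apply Rle_Rpower_l; lra.
Qed.

Lemma rpow_sqrt_mul s x :
  0 < s -> 0 <= x -> rpow (sqrt s * x) (2/3) = rpow s (1/3) * rpow x (2/3).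
Proof.
  intros Hs Hx. assert (Hss : 0 < sqrt s) by (apply sqrt_lt_R0; lra).
  unfold rpow.
  destruct (Rle_dec x 0) as [Hx0|Hx0].
  - destruct (Rle_dec (sqrt s * x) 0); [ring|nra].
  - destruct (Rle_dec (sqrt s * x) 0); [nra|]. destruct (Rle_dec s 0); [lra|].
    rewrite <- Rpower_mult_distr, <- Rpower_sqrt, Rpower_mult by lra.
    do 2 f_equal; field.
Qed.

(* t = (b / a^2)^(1/3) makes both terms equal to (a b)^(2/3): the equality case of AM-GM. *)
Lemma balanced_scaling a b :
  0 < a -> 0 < b -> exists t, 0 < t /\ a ^ 2 * t ^ 2 + b / t = 2 * rpow (a * b) (2/3).
Proof.
  intros Ha Hb. exists (exp ((ln b - 2 * ln a) / 3)). split; [apply exp_pos|].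
  unfold rpow. destruct (Rle_dec (a * b) 0); [nra|]. unfold Rpower.
  rewrite ln_mult by lra.
  rewrite <- (exp_ln a) at 1 by lra. rewrite <- (exp_ln b) at 2 by lra.
  set (la := ln a); set (lb := ln b).
  assert (Hl : exp la ^ 2 * exp ((lb - 2 * la) / 3) ^ 2 = exp (2/3 * (la + lb))).
  { simpl; rewrite !Rmult_1_r, <- !exp_plus; f_equal; field. }
  assert (Hr : exp lb / exp ((lb - 2 * la) / 3) = exp (2/3 * (la + lb))).
  { replace (exp lb) with (exp (2/3 * (la + lb)) * exp ((lb - 2 * la) / 3))
      by (rewrite <- exp_plus; f_equal; field).
    field; apply Rgt_not_eq, exp_pos. }
  rewrite Hl, Hr; ring.
Qed.

Lemma rank_one_rebalance n1 n2 (u v : nat -> R) :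
  exists p : (nat -> R) * (nat -> R),
    (forall i j, (i < n1)%nat -> (j < n2)%nat -> fst p i * snd p j = u i * v j) /\
    norm2 n1 (fst p) ^ 2 + norm1 n2 (snd p) <= 2 * rpow (norm2 n1 u * norm1 n2 v) (2/3).
Proof.
  pose proof (norm2_nonneg n1 u); pose proof (norm1_nonneg n2 v).
  destruct (Req_dec (norm2 n1 u) 0) as [Hu|Hu];
  [|destruct (Req_dec (norm1 n2 v) 0) as [Hv|Hv]].
  1,2: exists (fun _ => 0, fun _ => 0); cbn [fst snd];
       rewrite norm2_const0, norm1_const0; split;
       [ intros i j Hi Hj;
         first [rewrite (norm2_eq0 n1 u Hu i Hi) | rewrite (norm1_eq0 n2 v Hv j Hj)]; ring
       | pose proof (rpow_nonneg (norm2 n1 u * norm1 n2 v) (2/3)); lra ].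
  destruct (balanced_scaling (norm2 n1 u) (norm1 n2 v)) as [t [Ht Hbal]]; [lra|lra|].
  exists (fun i => t * u i, fun j => v j / t); cbn [fst snd]. split.
  - intros; field; lra.
  - rewrite norm2_scale_sq, norm1_div by exact Ht. rewrite <- Hbal; right; ring.
Qed.

Lemma sum_outer_rebalance n1 n2 K (U V : nat -> nat -> R) :
  exists U' V' : nat -> nat -> R,
    mat_eq n1 n2 (sum_outer K U' V') (sum_outer K U V) /\
    forall r, norm2 n1 (U' r) ^ 2 + norm1 n2 (V' r)
              <= 2 * rpow (norm2 n1 (U r) * norm1 n2 (V r)) (2/3).
Proof.
  destruct (choice _ (fun r => rank_one_rebalance n1 n2 (U r) (V r))) as [f Hf].
  exists (fun r => fst (f r)), (fun r => snd (f r)). split.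
  - intros i j Hi Hj; unfold sum_outer; apply rsum_ext; intros r _.
    apply (proj1 (Hf r)); assumption.
  - intros r; apply (proj2 (Hf r)).
Qed.

Lemma rpow_mul_sparse_le (a b c s : R) :
  0 < s -> 0 <= a -> 0 <= b -> b <= sqrt s * c ->
  rpow (a * b) (2/3) <= rpow s (1/3) * rpow (a * c) (2/3).
Proof.
  intros Hs Ha Hb Hbc. assert (0 <= sqrt s * c) by lra.
  rewrite <- rpow_sqrt_mul by (try lra; pose proof (sqrt_lt_R0 s Hs); nra).
  apply rpow_le_compat; [lra|]. split; nra.
Qed.

(* The zero vector is sent to the first basis vector, so that directions are always unit
   vectors. *)
Definition direction (n : nat) (u : nat -> R) : nat -> R :=
  if Req_dec_T (norm2 n u) 0 then (fun i => if Nat.eqb i 0 then 1 else 0)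
  else (fun i => u i / norm2 n u).

Lemma direction_decomp n u i : (i < n)%nat -> u i = norm2 n u * direction n u i.
Proof.
  intros Hi; unfold direction; destruct (Req_dec_T (norm2 n u) 0) as [E|E].
  - rewrite E, (norm2_eq0 n u E i Hi); ring.
  - field; exact E.
Qed.

Lemma direction_norm2 n u : (1 <= n)%nat -> norm2 n (direction n u) = 1.
Proof.
  intros Hn; unfold direction; destruct (Req_dec_T (norm2 n u) 0) as [E|E].
  - unfold norm2; rewrite rsum_supp0 by
      (assumption || (intros [|i] Hi; [lia|simpl; ring])).
    simpl; rewrite !Rmult_1_r; apply sqrt_1.
  - pose proof (norm2_nonneg n u).
    apply Rsqr_inj; [apply norm2_nonneg|lra|].
    rewrite !Rsqr_pow2, norm2_sq.
    rewrite (rsum_ext n _ (fun i => / norm2 n u ^ 2 * u i ^ 2))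
      by (intros; field; exact E).
    rewrite rsum_scal, <- norm2_sq; field; exact E.
Qed.

Lemma direction_norm1_le n u s :
  (1 <= n)%nat -> 1 <= s -> norm1 n u <= sqrt s * norm2 n u ->
  norm1 n (direction n u) <= sqrt s.
Proof.
  intros Hn Hs Hu; unfold direction; destruct (Req_dec_T (norm2 n u) 0) as [E|E].
  - unfold norm1; rewrite rsum_supp0 by
      (assumption || (intros [|i] Hi; [lia|simpl; apply Rabs_R0])).
    simpl; rewrite Rabs_R1, <- sqrt_1; apply sqrt_le_1_alt; exact Hs.
  - pose proof (norm2_nonneg n u).
    rewrite norm1_div by lra.
    apply Rmult_le_reg_r with (norm2 n u); [lra|].
    unfold Rdiv; rewrite Rmult_assoc, Rinv_l by exact E; lra.
Qed.

Lemma inKR_mat_eq n1 n2 K Gam s1 s2 Z W :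
  mat_eq n1 n2 Z W -> inKR n1 n2 K Gam s1 s2 W -> inKR n1 n2 K Gam s1 s2 Z.
Proof.
  intros HZW [sig [U [V [HUV [Hsig HW]]]]].
  exists sig, U, V; split; [exact HUV|split; [exact Hsig|]].
  intros i j Hi Hj; rewrite HZW, HW; auto.
Qed.

Definition effectively_sparse (n K : nat) (s : R) (V : nat -> nat -> R) : Prop :=
  forall r, (r < K)%nat -> norm1 n (V r) <= sqrt s * norm2 n (V r).

Definition scales (n1 n2 : nat) (U V : nat -> nat -> R) : nat -> R :=
  fun r => norm2 n1 (U r) * norm2 n2 (V r).

Lemma effectively_sparse_mono n K s s' V :
  s <= s' -> effectively_sparse n K s V -> effectively_sparse n K s' V.
Proof.
  intros Hss HV r Hr; eapply Rle_trans; [apply HV, Hr|].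
  apply Rmult_le_compat_r; [apply norm2_nonneg|apply sqrt_le_1_alt, Hss].
Qed.

Lemma norm2_scales_le n1 n2 K (U V : nat -> nat -> R) G :
  0 <= G -> rsum K (fun r => norm2 n1 (U r) ^ 2 * norm2 n2 (V r) ^ 2) <= G ^ 2 ->
  norm2 K (scales n1 n2 U V) <= G.
Proof.
  intros HG H; rewrite <- (sqrt_pow2 G HG); apply sqrt_le_1_alt.
  eapply Rle_trans; [|exact H]; right; apply rsum_ext; intros; unfold scales; ring.
Qed.

Lemma sum_outer_inKR n1 n2 K Gam s (U V : nat -> nat -> R) :
  (1 <= n1)%nat -> (1 <= n2)%nat -> 1 <= s ->
  effectively_sparse n2 K s V -> norm2 K (scales n1 n2 U V) <= Gam ->
  inKR n1 n2 K Gam (INR n1) s (sum_outer K U V).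
Proof.
  intros Hn1 Hn2 Hs HV HGam.
  exists (scales n1 n2 U V), (fun r => direction n1 (U r)), (fun r => direction n2 (V r)).
  split; [|split; [exact HGam|]].
  - intros r Hr; unfold inK; rewrite !direction_norm2 by assumption.
    pose proof (norm1_le_sqrt_dim n1 (direction n1 (U r))) as H1.
    rewrite direction_norm2, Rmult_1_r in H1 by assumption.
    split; [split; [lra|exact H1]|].
    split; [split; [lra|apply direction_norm1_le; auto]|]. split; reflexivity.
  - intros i j Hi Hj; unfold sum_outer, wsum_outer; apply rsum_ext; intros r _.
    rewrite (direction_decomp n1 (U r) i Hi) at 1.
    rewrite (direction_decomp n2 (V r) j Hj) at 1. unfold scales; ring.
Qed.

Definition fam_app (K : nat) (F G : nat -> nat -> R) : nat -> nat -> R :=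
  fun r => if (r <? K)%nat then F r else G (r - K)%nat.

Lemma rsum_fam_app K (h : nat -> R) f g :
  (forall r, (r < K)%nat -> h r = f r /\ h (K + r)%nat = g r) ->
  rsum (2 * K) h = rsum K f + rsum K g.
Proof.
  intros H. replace (2 * K)%nat with (K + K)%nat by lia.
  rewrite rsum_app; f_equal; apply rsum_ext; intros; apply H; assumption.
Qed.

Lemma fam_app_l K F G r : (r < K)%nat -> fam_app K F G r = F r.
Proof. intros Hr; unfold fam_app; rewrite (proj2 (Nat.ltb_lt r K) Hr); reflexivity. Qed.

Lemma fam_app_r K F G r : fam_app K F G (K + r) = G r.
Proof.
  unfold fam_app; rewrite (proj2 (Nat.ltb_ge (K + r) K)) by lia.
  f_equal; lia.
Qed.

Lemma sub_sum_outer_inKR n1 n2 K G1 G2 s (U1 V1 U2 V2 : nat -> nat -> R) :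
  (1 <= n1)%nat -> (1 <= n2)%nat -> 1 <= s ->
  effectively_sparse n2 K s V1 -> effectively_sparse n2 K s V2 ->
  norm2 K (scales n1 n2 U1 V1) <= G1 -> norm2 K (scales n1 n2 U2 V2) <= G2 ->
  inKR n1 n2 (2 * K) (G1 + G2) (INR n1) s
    (mat_sub (sum_outer K U1 V1) (sum_outer K U2 V2)).
Proof.
  intros Hn1 Hn2 Hs HV1 HV2 HG1 HG2.
  set (U := fam_app K U1 (fun r i => - U2 r i)); set (V := fam_app K V1 V2).
  apply inKR_mat_eq with (sum_outer (2 * K) U V).
  { intros i j _ _; unfold mat_sub, sum_outer.
    rewrite (rsum_fam_app K _ (fun r => U1 r i * V1 r j) (fun r => - (U2 r i * V2 r j))).
    - rewrite (rsum_ext K (fun r => - (U2 r i * V2 r j)) (fun r => -1 * (U2 r i * V2 r j)))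
        by (intros; ring).
      rewrite rsum_scal; ring.
    - intros r Hr; unfold U, V; rewrite !fam_app_l, !fam_app_r by assumption.
      split; ring. }
  apply sum_outer_inKR; try assumption.
  - intros r Hr; unfold V. destruct (Nat.lt_ge_cases r K) as [Hlt|Hge].
    + rewrite fam_app_l by assumption; auto.
    + replace r with (K + (r - K))%nat by lia; rewrite fam_app_r; apply HV2; lia.
  - pose proof (norm2_nonneg K (scales n1 n2 U1 V1)).
    pose proof (norm2_nonneg K (scales n1 n2 U2 V2)).
    eapply Rle_trans; [|apply Rplus_le_compat; eassumption].
    eapply Rle_trans; [|apply sqrt_sum_sqr_le; assumption].
    unfold norm2 at 1; apply Req_le; f_equal; rewrite !norm2_sq.
    apply rsum_fam_app; intros r Hr; unfold scales, U, V.
    rewrite !fam_app_l, !fam_app_r, norm2_opp by assumption; split; reflexivity.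
Qed.

Lemma sum_outer_inKR_double n1 n2 K G1 G2 s (U V : nat -> nat -> R) :
  (1 <= n1)%nat -> (1 <= n2)%nat -> 1 <= s -> 0 <= G2 ->
  effectively_sparse n2 K s V -> norm2 K (scales n1 n2 U V) <= G1 ->
  inKR n1 n2 (2 * K) (G1 + G2) (INR n1) s (sum_outer K U V).
Proof.
  intros Hn1 Hn2 Hs HG2 HV HG1.
  set (O := fun (_ : nat) (_ : nat) => 0).
  apply inKR_mat_eq with (mat_sub (sum_outer K U V) (sum_outer K O O)).
  - intros i j _ _; unfold mat_sub, sum_outer, O.
    rewrite (rsum_ext K (fun r => 0 * 0) (fun _ => 0)), rsum_zero by (intros; ring); ring.
  - apply sub_sum_outer_inKR; try assumption.
    + intros r _; unfold O; rewrite norm1_const0, norm2_const0; lra.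
    + rewrite (norm2_ext K _ (fun _ => 0)), norm2_const0 by
        (intros; unfold scales, O; rewrite norm2_const0; ring).
      exact HG2.
Qed.

Lemma sparse_RIP_frob_le m n1 n2 a K s1 s2 Gam delta Z :
  sparse_RIP m n1 n2 a K s1 s2 Gam delta -> inKR n1 n2 K Gam s1 s2 Z ->
  frob n1 n2 Z <= norm2 m (applyA n1 n2 a Z) + sqrt delta.
Proof.
  intros HRIP HZ; specialize (HRIP Z HZ).
  pose proof (Rabs_pos (norm2 m (applyA n1 n2 a Z) ^ 2 - frob n1 n2 Z ^ 2)).
  apply le_add_sqrt_of_sqr; [apply sqrt_pos|apply norm2_nonneg|lra|].
  rewrite <- Rabs_Ropp in HRIP.
  pose proof (Rle_abs (- (norm2 m (applyA n1 n2 a Z) ^ 2 - frob n1 n2 Z ^ 2))). lra.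
Qed.

Lemma sparse_RIP_norm_le m n1 n2 a K s1 s2 Gam delta Z :
  sparse_RIP m n1 n2 a K s1 s2 Gam delta -> inKR n1 n2 K Gam s1 s2 Z ->
  norm2 m (applyA n1 n2 a Z) <= frob n1 n2 Z + sqrt delta.
Proof.
  intros HRIP HZ; specialize (HRIP Z HZ).
  pose proof (Rabs_pos (norm2 m (applyA n1 n2 a Z) ^ 2 - frob n1 n2 Z ^ 2)).
  apply le_add_sqrt_of_sqr; [apply norm2_nonneg|apply sqrt_pos|lra|].
  pose proof (Rle_abs (norm2 m (applyA n1 n2 a Z) ^ 2 - frob n1 n2 Z ^ 2)). lra.
Qed.

Lemma applyA_mat_eq n1 n2 a Z W k :
  mat_eq n1 n2 Z W -> applyA n1 n2 a Z k = applyA n1 n2 a W k.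
Proof.
  intros H; unfold applyA; apply rsum_ext; intros i Hi.
  apply rsum_ext; intros j Hj; rewrite H; auto.
Qed.

Lemma applyA_sub n1 n2 a Z W k :
  applyA n1 n2 a (mat_sub Z W) k = applyA n1 n2 a Z k - applyA n1 n2 a W k.
Proof.
  unfold applyA, mat_sub; rewrite <- rsum_minus; apply rsum_ext; intros.
  rewrite <- rsum_minus; apply rsum_ext; intros; ring.
Qed.

Lemma applyA_sum_outer0 n1 n2 a K k :
  applyA n1 n2 a (sum_outer K (fun _ _ => 0) (fun _ _ => 0)) k = 0.
Proof.
  unfold applyA, sum_outer.
  rewrite (rsum_ext n1 _ (fun _ => 0)); [apply rsum_zero|]. intros i _.
  rewrite (rsum_ext n2 _ (fun _ => 0)); [apply rsum_zero|]. intros j _.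
  rewrite (rsum_ext K _ (fun _ => 0)) by (intros; ring). rewrite rsum_zero; ring.
Qed.

Lemma has_rank_nondegenerate n1 n2 K (U V : nat -> nat -> R) :
  (1 <= K)%nat -> has_rank n1 n2 (sum_outer K U V) K ->
  exists r, (r < K)%nat /\ 0 < norm2 n1 (U r) /\ 0 < norm2 n2 (V r).
Proof.
  intros HK [_ Hmin]. apply NNPP; intros Hnone.
  enough (K <= 0)%nat by lia.
  apply (Hmin O U V); intros i j Hi Hj; unfold sum_outer; cbn [rsum].
  rewrite <- (rsum_zero K); apply rsum_ext; intros r Hr.
  destruct (Req_dec (norm2 n1 (U r)) 0) as [Hu|Hu].
  { rewrite (norm2_eq0 _ _ Hu i Hi); ring. }
  destruct (Req_dec (norm2 n2 (V r)) 0) as [Hv|Hv].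
  { rewrite (norm2_eq0 _ _ Hv j Hj); ring. }
  exfalso; apply Hnone; exists r.
  pose proof (norm2_nonneg n1 (U r)); pose proof (norm2_nonneg n2 (V r)).
  repeat split; [assumption|lra|lra].
Qed.

Lemma has_rank_dims n1 n2 K (U V : nat -> nat -> R) :
  (1 <= K)%nat -> has_rank n1 n2 (sum_outer K U V) K -> (1 <= n1)%nat /\ (1 <= n2)%nat.
Proof.
  intros HK Hrk; destruct (has_rank_nondegenerate _ _ _ _ _ HK Hrk) as [r [_ [Hu Hv]]].
  split; eapply norm2_pos_dim; eassumption.
Qed.

Lemma has_rank_rsum_rpow_pos n1 n2 K (U V : nat -> nat -> R) p :
  (1 <= K)%nat -> has_rank n1 n2 (sum_outer K U V) K ->
  0 < rsum K (fun r => rpow (scales n1 n2 U V r) p).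
Proof.
  intros HK Hrk; destruct (has_rank_nondegenerate _ _ _ _ _ HK Hrk) as [r [Hr [Hu Hv]]].
  eapply Rlt_le_trans; [|apply (rsum_term_le _ _ r (fun i _ => rpow_nonneg _ _) Hr)].
  apply rpow_pos; unfold scales; nra.
Qed.

Section Minimizer.

Variables (m n1 n2 Rk : nat) (a : nat -> nat -> nat -> R) (y : nat -> R) (alpha : R).
Variables U V : nat -> nat -> R.
Hypothesis alpha_ge0 : 0 <= alpha.
Hypothesis minimal : forall U' V' : nat -> nat -> R,
  Jfun m n1 n2 a y alpha alpha Rk U V <= Jfun m n1 n2 a y alpha alpha Rk U' V'.

Lemma Jfun_ge_residual U' V' :
  norm2 m (fun k => y k - applyA n1 n2 a (sum_outer Rk U' V') k) ^ 2
  <= Jfun m n1 n2 a y alpha alpha Rk U' V'.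
Proof.
  unfold Jfun.
  pose proof (rsum_nonneg Rk (fun r => norm2 n1 (U' r) ^ 2) (fun r _ => pow2_ge_0 _)).
  pose proof (rsum_nonneg Rk (fun r => norm1 n2 (V' r)) (fun r _ => norm1_nonneg _ _)).
  nra.
Qed.

Lemma minimizer_J_le_data : Jfun m n1 n2 a y alpha alpha Rk U V <= norm2 m y ^ 2.
Proof.
  eapply Rle_trans; [apply (minimal (fun _ _ => 0) (fun _ _ => 0))|]. unfold Jfun.
  rewrite (rsum_ext Rk _ (fun _ => 0)) by (intros; rewrite norm2_const0; ring).
  rewrite (rsum_ext Rk (fun r => norm1 n2 _) (fun _ => 0))
    by (intros; apply norm1_const0).
  rewrite rsum_zero, (norm2_ext m _ y); [right; ring|].
  intros k _; rewrite applyA_sum_outer0; ring.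
Qed.

(* The l1 penalty of a minimiser is at most J(0,0) = |y|^2, which the hypothesis on
   the l2 norms bounds by gam |v^r|_2. *)
Lemma minimizer_effectively_sparse gam s M :
  0 < alpha -> 0 < gam -> norm2 m y ^ 2 <= M ->
  (forall r, (r < Rk)%nat -> norm2 n2 (V r) >= M / gam) ->
  effectively_sparse n2 Rk (Rmax s ((gam / alpha) ^ 2)) V.
Proof.
  intros Hal Hgam HyM Hv r Hr.
  assert (Hpen : alpha * norm1 n2 (V r) <= norm2 m y ^ 2).
  { eapply Rle_trans; [|apply minimizer_J_le_data]. unfold Jfun.
    pose proof (rsum_term_le Rk (fun r => norm1 n2 (V r)) r
                  (fun i _ => norm1_nonneg n2 (V i)) Hr).
    pose proof (rsum_nonneg Rk (fun r => norm2 n1 (U r) ^ 2) (fun i _ => pow2_ge_0 _)).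
    pose proof (pow2_ge_0
      (norm2 m (fun k => y k - applyA n1 n2 a (sum_outer Rk U V) k))).
    nra. }
  assert (Hy : norm2 m y ^ 2 <= gam * norm2 n2 (V r)).
  { specialize (Hv r Hr); apply Rge_le in Hv.
    replace M with (gam * (M / gam)) in HyM by (field; lra).
    pose proof (Rmult_le_compat_l gam _ _ (Rlt_le _ _ Hgam) Hv). lra. }
  assert (Hga : gam / alpha <= sqrt (Rmax s ((gam / alpha) ^ 2)))
    by (apply le_sqrt_Rmax_sqr, Rlt_le, Rdiv_lt_0_compat; assumption).
  pose proof (norm2_nonneg n2 (V r)).
  apply Rmult_le_reg_l with alpha; [exact Hal|].
  apply Rle_trans with (gam * norm2 n2 (V r)); [lra|].
  replace gam with (alpha * (gam / alpha)) at 1 by (field; lra).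
  rewrite Rmult_assoc; apply Rmult_le_compat_l; [lra|].
  apply Rmult_le_compat_r; assumption.
Qed.

(* Compare with the factorisation of the ground truth rescaled so that each pair pays
   the minimal penalty 2 (|u|_2 |v|_1)^(2/3). *)
Lemma minimizer_residual_le (Uh Vh : nat -> nat -> R) s :
  0 < s ->
  effectively_sparse n2 Rk s Vh ->
  norm2 m (fun k => y k - applyA n1 n2 a (sum_outer Rk U V) k) ^ 2
  <= norm2 m (fun k => y k - applyA n1 n2 a (sum_outer Rk Uh Vh) k) ^ 2
     + 2 * alpha * rpow s (1/3)
       * rsum Rk (fun r => rpow (norm2 n1 (Uh r) * norm2 n2 (Vh r)) (2/3)).
Proof.
  intros Hs HVh.
  destruct (sum_outer_rebalance n1 n2 Rk Uh Vh) as [U' [V' [Heq Hbal]]].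
  eapply Rle_trans; [apply Jfun_ge_residual|].
  eapply Rle_trans; [apply (minimal U' V')|]. unfold Jfun.
  rewrite (norm2_ext m (fun k => y k - applyA n1 n2 a (sum_outer Rk U' V') k)
             (fun k => y k - applyA n1 n2 a (sum_outer Rk Uh Vh) k))
    by (intros; rewrite (applyA_mat_eq _ _ _ _ _ _ Heq); reflexivity).
  rewrite Rplus_assoc, <- Rmult_plus_distr_l, <- rsum_plus.
  apply Rplus_le_compat_l.
  rewrite Rmult_assoc, <- !rsum_scal.
  apply rsum_le; intros r Hr.
  pose proof (rpow_nonneg s (1/3)).
  pose proof (rpow_mul_sparse_le (norm2 n1 (Uh r)) (norm1 n2 (Vh r)) (norm2 n2 (Vh r)) s
                Hs (norm2_nonneg _ _) (norm1_nonneg _ _) (HVh r Hr)).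
  specialize (Hbal r).
  rewrite (Rmult_comm 2 alpha), Rmult_assoc.
  apply Rmult_le_compat_l; [exact alpha_ge0|]. lra.
Qed.

End Minimizer.

Theorem mainTheorem7
  (m n1 n2 Rk : nat) (a : nat -> nat -> nat -> R)
  (Gam s gam c cU delta : R)
  (Uh Vh : nat -> nat -> R) (eta : nat -> R)
  (hR : (1 <= Rk)%nat) (hGam : 1 <= Gam)
  (hs1 : 1 <= s) (hs2 : s <= INR n2) (hgam : 0 < gam) (hc : 1 <= c)
  (hrank : has_rank n1 n2 (sum_outer Rk Uh Vh) Rk)
  (hsparse : forall r, (r < Rk)%nat ->
     norm1 n2 (Vh r) <= sqrt s * norm2 n2 (Vh r))
  (hGamma : rsum Rk (fun r => norm2 n1 (Uh r) ^ 2 * norm2 n2 (Vh r) ^ 2) <= Gam ^ 2)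
  (hcU : 0 < cU)
  (hcU2 : rsum Rk (fun r => rpow (norm2 n1 (Uh r) * norm2 n2 (Vh r)) (2/3))
          <= cU * rpow (INR Rk) (2/3) * schatten_pow (2/3) n1 n2 (sum_outer Rk Uh Vh))
  (heta : exists k, (k < m)%nat /\ eta k <> 0)
  (halpha : norm2 m eta ^ 2 / schatten_pow (2/3) n1 n2 (sum_outer Rk Uh Vh) < 1)
  (hdelta : 0 < delta < 1)
  (hRIP : sparse_RIP m n1 n2 a (2 * Rk) (INR n1)
     (Rmax s (gam ^ 2 * (schatten_pow (2/3) n1 n2 (sum_outer Rk Uh Vh)
                          / norm2 m eta ^ 2) ^ 2))
     ((c + 1) * Gam) delta) :
  let Xh := sum_outer Rk Uh Vh in
  let alpha := norm2 m eta ^ 2 / schatten_pow (2/3) n1 n2 Xh in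
  let y := fun k => applyA n1 n2 a Xh k + eta k in
  forall U V : nat -> nat -> R,
    (forall U' V', Jfun m n1 n2 a y alpha alpha Rk U V
                   <= Jfun m n1 n2 a y alpha alpha Rk U' V') ->
    norm2 Rk (fun r => norm2 n1 (U r) * norm2 n2 (V r)) <= c * Gam ->
    (forall r, (r < Rk)%nat ->
       norm2 n2 (V r) >= (frob n1 n2 Xh + norm2 m eta + sqrt delta) ^ 2 / gam) ->
    frob n1 n2 (mat_sub Xh (sum_outer Rk U V))
      <= (2 * sqrt (cU * rpow (INR Rk) (2/3) * rpow s (1/3)) + 2) * norm2 m eta
         + sqrt delta.
Proof.
  intros Xh alpha y U V Hmin Hsig Hv; subst Xh alpha y.
  set (Xh := sum_outer Rk Uh Vh) in *.
  set (S := schatten_pow (2/3) n1 n2 Xh) in *; set (E := norm2 m eta) in *.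
  set (alpha := E ^ 2 / S) in *; set (y := fun k => applyA n1 n2 a Xh k + eta k) in *.
  set (Q := cU * rpow (INR Rk) (2/3) * rpow s (1/3)).
  set (resid := fun k => y k - applyA n1 n2 a (sum_outer Rk U V) k).
  destruct (has_rank_dims _ _ _ _ _ hR hrank) as [Hn1 Hn2].
  assert (HE : 0 < E) by exact (norm2_pos_of_nonzero m eta heta).
  assert (HcR : 0 < cU * rpow (INR Rk) (2/3))
    by (apply Rmult_lt_0_compat; [exact hcU|apply rpow_pos, lt_0_INR; lia]).
  assert (HS : 0 < S).
  { pose proof (has_rank_rsum_rpow_pos _ _ _ _ _ (2/3) hR hrank); unfold scales in *; nra. }
  assert (Hal : alpha * S = E ^ 2) by (unfold alpha; field; lra).
  assert (Hal0 : 0 < alpha) by (unfold alpha; apply Rdiv_lt_0_compat; nra).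
  replace ((c + 1) * Gam) with (Gam + c * Gam) in hRIP by ring.
  replace (Rmax s _) with (Rmax s ((gam / alpha) ^ 2)) in hRIP
    by (unfold alpha; f_equal; field; lra).
  set (s2 := Rmax s ((gam / alpha) ^ 2)) in hRIP.
  assert (Hs2 : s <= s2) by apply Rmax_l.
  assert (HVh := effectively_sparse_mono _ _ _ _ _ Hs2 hsparse).
  assert (HGh := norm2_scales_le n1 n2 Rk Uh Vh Gam ltac:(lra) hGamma).
  assert (HAX : norm2 m (applyA n1 n2 a Xh) <= frob n1 n2 Xh + sqrt delta).
  { eapply sparse_RIP_norm_le; [exact hRIP|].
    apply sum_outer_inKR_double; auto; nra. }
  assert (HV : effectively_sparse n2 Rk s2 V).
  { apply (minimizer_effectively_sparse m n1 n2 Rk a y alpha U V (Rlt_le _ _ Hal0) Hmin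
             gam s ((frob n1 n2 Xh + E + sqrt delta) ^ 2)); try assumption.
    pose proof (norm2_add_le m (applyA n1 n2 a Xh) eta) as Hy; fold y E in Hy.
    apply pow_incr; split; [apply norm2_nonneg|lra]. }
  assert (Hlow : frob n1 n2 (mat_sub Xh (sum_outer Rk U V))
                 <= norm2 m (applyA n1 n2 a (mat_sub Xh (sum_outer Rk U V))) + sqrt delta).
  { eapply sparse_RIP_frob_le; [exact hRIP|].
    apply sub_sum_outer_inKR; auto; lra. }
  assert (Hres : norm2 m (applyA n1 n2 a (mat_sub Xh (sum_outer Rk U V)))
                 <= norm2 m resid + E).
  { rewrite (norm2_ext m _ (fun k => resid k - eta k))
      by (intros; rewrite applyA_sub; unfold resid, y; ring).
    apply norm2_sub_le. }
  assert (Hfit : norm2 m resid <= E * (1 + 2 * sqrt Q)).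
  { pose proof (rpow_nonneg s (1/3)).
    apply le_mul_one_plus_sqrt; [apply norm2_nonneg|lra|unfold Q; nra|].
    eapply Rle_trans;
      [apply (minimizer_residual_le m n1 n2 Rk a y alpha U V (Rlt_le _ _ Hal0) Hmin Uh Vh s);
       [lra|exact hsparse]|].
    rewrite (norm2_ext m _ eta) by (intros; unfold y, Xh; ring); fold E.
    apply (Rmult_le_compat_l (2 * alpha * rpow s (1/3))) in hcU2; [|nra].
    replace (2 * alpha * rpow s (1/3) * (cU * rpow (INR Rk) (2/3) * S))
      with (2 * E ^ 2 * Q) in hcU2 by (rewrite <- Hal; unfold Q; ring).
    lra. }
  lra.
Qed.
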